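(* Let $\Gamma$ be a weakly distance-regular digraph, let $q\ge3$, and let $(x_0,x_1,\dots,x_{m-1})$ be a circuit consisting of arcs of type $(1,q-1)$ whose length $m$ is minimal among all circuits of $\Gamma$ consisting of arcs of type $(1,q-1)$. Let $(a,b)=\tilde\partial(x_0,x_2)$ and assume $k_{1,q-1}\ge k_{a,b}$. For each $i$ (indices read modulo $m$) let $Y_i=P_{(1,q-1),(1,q-1)}(x_{i-1},x_{i+1})$. If $p_{(1,q-1),(1,q-1)}^{(2,q-2)}>0$ or $|\Gamma_{1,q-1}^2|=1$, then for all $i$ we have $(x_{i-1},x_{i+1})\in\Gamma_{a,b}$ and \[P_{(a,b),(q-1,1)}(x_{i-2},x_{i-1})=P_{(q-1,1),(a,b)}(x_{i+1},x_{i+2})=Y_i.\] Moreover, if $q>3$ and $\Gamma$ is a Cayley digraph of an additive group, then $Y_i-x_{i-1}=Y_{i+1}-x_i$ for all $i$.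
   Context: Digraphs are finite and simple. $\partial(x,y)$ is the length of a shortest directed path from $x$ to $y$; $\tilde\partial(x,y)=(\partial(x,y),\partial(y,x))$; $\Gamma_{\tilde i}=\{(x,y):\tilde\partial(x,y)=\tilde i\}$, and $\Gamma_{a,b}$ means $\Gamma_{(a,b)}$. A strongly connected digraph $\Gamma$ is weakly distance-regular if $(V\Gamma,\{\Gamma_{\tilde i}\})$ is an association scheme. For pairs $\tilde i,\tilde j$ and vertices $x,y$, $P_{\tilde i,\tilde j}(x,y)=\{z:\tilde\partial(x,z)=\tilde i,\ \tilde\partial(z,y)=\tilde j\}$, and $p_{\tilde i,\tilde j}^{\tilde l}=|P_{\tilde i,\tilde j}(x,y)|$ for any $(x,y)\in\Gamma_{\tilde l}$ (taken to be $0$ if $\tilde l$ is not a two-way distance of $\Gamma$). $k_{a,b}=|\{y:\tilde\partial(x,y)=(a,b)\}|$ is the valency. $\Gamma_{1,q-1}^2$ is the set of relations $\Gamma_{\tilde l}$ with $p_{(1,q-1),(1,q-1)}^{\tilde l}\ne0$. An arc $(u,v)$ is of type $(1,r)$ if $\partial(v,u)=r$. A circuit is a closed directed path with distinct vertices. A Cayley digraph of an additive group $G$ with respect to $S\subseteq G\setminus\{0\}$ has vertex set $G$ and arcs $(x,y)$ with $y-x\in S$; for a set $Y$ and element $x$, $Y-x=\{y-x:y\in Y\}$. *)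

From HB Require Import structures.
From mathcomp Require Import all_boot all_order all_algebra.
Set Implicit Arguments. Unset Strict Implicit. Unset Printing Implicit Defensive.
Import GRing.Theory Num.Theory.

Section Digraph.
Variables (V : finType) (A : rel V).

Fixpoint walkn (n : nat) (x y : V) : bool :=
  match n with
  | 0 => x == y
  | n'.+1 => [exists z, A x z && walkn n' z y]
  end.

Definition strongly_connected : Prop := forall x y : V, exists n, walkn n x y.

(* length of a shortest directed path (= shortest walk) from x to y;
   meaningful when y is reachable from x (shortest walk has length < #|V|) *)
Definition dist (x y : V) : nat := find (fun n => walkn n x y) (iota 0 #|V|).

Definition tdist (x y : V) : nat * nat := (dist x y, dist y x).

Definition Pset (i j : nat * nat) (x y : V) : {set V} :=
  [set z | (tdist x z == i) && (tdist z y == j)].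

(* simple, strongly connected, and the two-way distance relations form an
   association scheme: identity relation is Gamma_{0,0}, they partition V*V,
   transposes are Gamma_{b,a} (all automatic); the remaining axiom is that
   |P_{i,j}(x,y)| depends only on tdist x y. *)
Definition weakly_distance_regular : Prop :=
  [/\ irreflexive A, strongly_connected &
      forall (i j : nat * nat) (x y x' y' : V), tdist x y = tdist x' y' ->
        #|Pset i j x y| = #|Pset i j x' y'| ].

(* intersection number p^l_{i,j}, 0 if l is not a two-way distance *)
Definition pnum (i j l : nat * nat) : nat :=
  if [pick xy : V * V | tdist xy.1 xy.2 == l] is Some xy
  then #|Pset i j xy.1 xy.2| else 0.

Definition valency (i : nat * nat) : nat :=
  if [pick x : V] is Some x then #|[set y | tdist x y == i]| else 0.

(* Gamma_i^2 : the (labels of the) relations Gamma_l with p^l_{i,i} <> 0 *)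
Definition Gamma_sq (i : nat * nat) : seq (nat * nat) :=
  undup [seq l <- [seq tdist xy.1 xy.2 | xy <- enum [set: V * V]] | pnum i i l != 0].

Definition arc_type (r : nat) (u v : V) : bool := A u v && (dist v u == r).

Definition type_circuit (r : nat) (s : seq V) : bool :=
  [&& s != [::], uniq s & cycle (arc_type r) s].

(* vertex x_i of the circuit (x0 :: xs), index i read modulo m = size (x0::xs) *)
Definition cvert (x0 : V) (xs : seq V) (i : int) : V :=
  nth x0 (x0 :: xs) `|(i %% (size xs).+1%:Z)%Z|%N.

Definition Ycirc (q : nat) (x0 : V) (xs : seq V) (i : int) : {set V} :=
  Pset (1, q - 1)%N (1, q - 1)%N (cvert x0 xs (i - 1)%R) (cvert x0 xs (i + 1)%R).

(* The digraph is (identified via the bijection phi with) the Cayley digraph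
   Cay(G,S) of the additive group G, S a subset of G \ {0}. *)
Definition cayley_iso (G : finZmodType) (S : {set G}) (phi : V -> G) : Prop :=
  [/\ bijective phi, (0 \notin S)%R &
      forall x y : V, A x y = ((phi y - phi x)%R \in S)].

End Digraph.

(* Write t = (1,q-1) and l = (a,b).  If every z in Y_i satisfies
   tdist(x_{i-2}, z) = tdist(z, x_{i+2}) = l, then Y_i is contained in both
   P_{l,(q-1,1)}(x_{i-2}, x_{i-1}) and P_{(q-1,1),l}(x_{i+1}, x_{i+2}), and these
   inclusions are equalities since double counting gives
   k_t p^t_{l,(q-1,1)} = k_l p^l_{t,t} <= k_t |Y_i|.  When |Gamma_t^2| = 1 every
   t,t-path has two-way distance l.  When p^{(2,q-2)}_{t,t} > 0, rerouting a closed
   walk of length q through t,t-paths produces a circuit of length q, so m = q, and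
   on a circuit this short the triangle inequality forces every distance above to
   be (2,q-2).
   In a Cayley digraph, translating z in Y_i by x_i - x_{i-1} gives a vertex of
   Y_{i+1}: this is the two-step argument again or, when q > 3, the first part
   applied to the circuit obtained by permuting the arc differences around x_i. *)

From HB Require Import structures.
From mathcomp Require Import all_boot all_order all_algebra.
From mathcomp Require Import zify.
Import GRing.Theory Num.Theory.
Set Implicit Arguments. Unset Strict Implicit.

Section Distance.
Variables (V : finType) (A : rel V).
Hypothesis strong : strongly_connected A.

Lemma walknP n x y :
  reflect (exists p, [/\ size p = n, path A x p & last x p = y]) (walkn A n x y).
Proof.
elim: n x => [|n IH] x /=.
  apply: (iffP eqP) => [->|[p [/size0nil -> _ /= ->]]] //; by exists [::].
apply: (iffP existsP) => [[z /andP[Axz /IH [p [sp pp lp]]]]|[[|z p] [//= [sp] /andP[Axz pp] lp]]].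
  by exists (z :: p); rewrite /= sp Axz pp lp.
by exists z; rewrite Axz; apply/IH; exists p.
Qed.

Lemma walkn_cat m n x y z : walkn A m x y -> walkn A n y z -> walkn A (m + n) x z.
Proof.
move=> /walknP [p [sp pp lp]] /walknP [r [sr pr lr]]; apply/walknP.
by exists (p ++ r); rewrite size_cat cat_path last_cat sp sr pp lp pr lr.
Qed.

Lemma walkn_shorten n x y : walkn A n x y -> exists2 k, k < #|V| & walkn A k x y.
Proof.
move=> /walknP [p [_ pp <-]]; have [p' pp' up' _] := shortenP pp.
exists (size p'); last by apply/walknP; exists p'.
by rewrite -ltnS -[(size p').+1]/(size (x :: p')) -(card_uniqP up') ltnS max_card.
Qed.

Lemma dist_min n x y : walkn A n x y -> dist A x y <= n.
Proof.
move=> Wn; have [ltnV | ] := ltnP n #|V|; last first.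
  by apply: leq_trans; rewrite -(size_iota 0 #|V|) find_size.
rewrite leqNgt; apply/negP => lt_n_find.
by have := before_find 0 lt_n_find; rewrite nth_iota // Wn.
Qed.

Lemma dist_walkn x y : walkn A (dist A x y) x y.
Proof.
have [n Wn] := strong x y; have [k ltkV Wk] := walkn_shorten Wn.
have has_walk : has (fun n => walkn A n x y) (iota 0 #|V|).
  by apply/hasP; exists k; rewrite ?mem_iota.
have := has_walk; rewrite has_find size_iota => lt_find.
by have := nth_find 0 has_walk; rewrite nth_iota.
Qed.

Lemma dist_triangle x y z : dist A x z <= dist A x y + dist A y z.
Proof. by apply/dist_min/walkn_cat; apply: dist_walkn. Qed.

Lemma dist_eq0 x y : (dist A x y == 0) = (x == y).
Proof.
apply/idP/eqP => [/eqP d0|->]; first by have := dist_walkn x y; rewrite d0 => /eqP.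
by rewrite -leqn0 (@dist_min 0) /=.
Qed.

Lemma distxx x : dist A x x = 0.
Proof. by apply/eqP; rewrite dist_eq0. Qed.

Lemma dist_eq1 x y : x != y -> (dist A x y == 1) = A x y.
Proof.
move=> neq_xy; apply/eqP/idP => [d1|Axy].
  by have := dist_walkn x y; rewrite d1 /= => /existsP [z /andP [Axz /eqP <-]].
apply/eqP; rewrite eqn_leq lt0n dist_eq0 neq_xy andbT.
by apply: (@dist_min 1) => /=; apply/existsP; exists y; rewrite Axy eqxx.
Qed.

Lemma dist_chain (c : nat -> V) n k :
  (forall j, A (c j) (c j.+1)) -> dist A (c n) (c (n + k)) <= k.
Proof.
move=> Ac; apply: dist_min; elim: k n => [|k IH] n /=; first by rewrite addn0.
by apply/existsP; exists (c n.+1); rewrite Ac addnS -addSn IH.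
Qed.

End Distance.

Definition swap_pair (l : nat * nat) : nat * nat := (l.2, l.1).

Lemma swap_pairK : involutive swap_pair. Proof. by case. Qed.

Section WeaklyDistanceRegular.
Variables (V : finType) (A : rel V).
Hypothesis wdr : weakly_distance_regular A.

Lemma wdr_irreflexive : irreflexive A. Proof. by case: wdr. Qed.
Lemma wdr_strongly_connected : strongly_connected A. Proof. by case: wdr. Qed.

Lemma tdist_sym x y : tdist A y x = swap_pair (tdist A x y).
Proof. by []. Qed.

Lemma eq_tdist_sym x y l : (tdist A y x == l) = (tdist A x y == swap_pair l).
Proof. by rewrite tdist_sym -{1}(swap_pairK l) (inj_eq (inv_inj swap_pairK)). Qed.

Lemma tdistxx x : tdist A x x = (0, 0).
Proof. by rewrite /tdist distxx //; apply: wdr_strongly_connected. Qed.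

Lemma dist_arc x y : A x y -> dist A x y = 1.
Proof.
move=> Axy; apply/eqP; rewrite dist_eq1 //; first exact: wdr_strongly_connected.
by apply: contraTneq Axy => ->; rewrite wdr_irreflexive.
Qed.

Lemma tdist_arc_type r x y : tdist A x y = (1, r) <-> arc_type A r x y.
Proof.
split=> [[d1 <-]|/andP [Axy /eqP <-]]; last by rewrite /tdist dist_arc.
rewrite /arc_type eqxx andbT -dist_eq1 ?d1 //; first exact: wdr_strongly_connected.
by apply: contra_eqN d1 => /eqP ->; rewrite distxx //; apply: wdr_strongly_connected.
Qed.

Lemma eq_card_Pset i j x y x' y' :
  tdist A x y = tdist A x' y' -> #|Pset A i j x y| = #|Pset A i j x' y'|.
Proof. by case: wdr => _ _; apply. Qed.

Lemma tdist1_arc r x y : tdist A x y = (1, r) -> A x y.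
Proof. by move/tdist_arc_type/andP => []. Qed.

Lemma pnumE i j l x y : tdist A x y = l -> pnum A i j l = #|Pset A i j x y|.
Proof.
rewrite /pnum => dxy; case: pickP => [[x' y'] /= /eqP dxy'|/(_ (x, y))]; last first.
  by rewrite /= dxy eqxx.
by apply: eq_card_Pset; rewrite dxy dxy'.
Qed.

Lemma Pset_sym i j x y : Pset A i j x y = Pset A (swap_pair j) (swap_pair i) y x.
Proof. by apply/setP => z; rewrite !inE andbC (eq_tdist_sym z y) (eq_tdist_sym x z) !swap_pairK. Qed.

Lemma pnum_sym i j l : pnum A i j l = pnum A (swap_pair j) (swap_pair i) (swap_pair l).
Proof.
rewrite /pnum; case: pickP => [[x y] /= /eqP dxy|none]; case: pickP => [[y' x'] /= dyx'|none'] //.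
- rewrite -Pset_sym; apply: eq_card_Pset.
  by move: dyx'; rewrite eq_tdist_sym swap_pairK dxy => /eqP.
- by have := none' (y, x); rewrite /= eq_tdist_sym swap_pairK dxy eqxx.
- by have := none (x', y'); rewrite /= -(swap_pairK l) -eq_tdist_sym dyx'.
Qed.

Lemma card_Pset i j x y :
  #|Pset A i j x y| = \sum_z ((tdist A x z == i) && (tdist A z y == j) : nat).
Proof. by rewrite -sum1_card big_mkcond; apply: eq_bigr => z _; rewrite inE; case: ifP. Qed.

Lemma valencyE l x : valency A l = #|[set y | tdist A x y == l]|.
Proof.
have valency_Pset z : [set y | tdist A z y == l] = Pset A l (swap_pair l) z z.
  by apply/setP => y; rewrite !inE eq_tdist_sym andbb.
rewrite /valency; case: pickP => [x' _|/(_ x) //].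
by rewrite !valency_Pset -!(@pnumE _ _ (0, 0)) ?tdistxx.
Qed.

Lemma valency_gt0 l x y : tdist A x y = l -> 0 < valency A l.
Proof. by move=> dxy; rewrite (valencyE l x); apply/card_gt0P; exists y; rewrite inE dxy. Qed.

Lemma valency_sym l : valency A (swap_pair l) = valency A l.
Proof.
have valency_sum x l' : valency A l' = \sum_y (tdist A x y == l' : nat).
  by rewrite (valencyE l' x) -sum1_card big_mkcond; apply: eq_bigr => y _; rewrite inE; case: eqP.
rewrite /valency; case: pickP => [x _|//]; rewrite -!(valencyE _ x).
have V_gt0 : 0 < #|V| by apply/card_gt0P; exists x.
apply/eqP; rewrite -(eqn_pmul2l V_gt0); apply/eqP; rewrite -!sum_nat_const.
rewrite (eq_bigr _ (fun y _ => valency_sum y _)) [RHS](eq_bigr _ (fun y _ => valency_sum y _)).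
by rewrite exchange_big; apply: eq_bigr => y _; apply: eq_bigr => z _; rewrite (eq_tdist_sym z y).
Qed.

Lemma valency_pnum_src i j l :
  valency A i * pnum A l (swap_pair j) i = valency A l * pnum A i j l.
Proof.
rewrite /valency; case: pickP => [x _|//]; rewrite -!(valencyE _ x).
have triples i' l' j' : valency A i' * pnum A l' j' i' =
    \sum_y \sum_z ((tdist A x y == i') && (tdist A x z == l') && (tdist A z y == j') : nat).
  rewrite (valencyE i' x) -sum_nat_const big_mkcond; apply: eq_bigr => y _; rewrite inE.
  by case: eqP => [dxy|_]; [rewrite (pnumE _ _ dxy) card_Pset | rewrite big1].
rewrite !triples [RHS]exchange_big; apply: eq_bigr => y _; apply: eq_bigr => z _.
by rewrite (eq_tdist_sym y z) swap_pairK [in RHS](andbC (tdist A x z == l)).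
Qed.

Lemma valency_pnum_tgt i j l :
  valency A (swap_pair j) * pnum A (swap_pair i) l j = valency A (swap_pair l) * pnum A i j l.
Proof.
rewrite pnum_sym swap_pairK.
have := valency_pnum_src (swap_pair j) (swap_pair i) (swap_pair l).
by rewrite swap_pairK => ->; rewrite pnum_sym !swap_pairK.
Qed.

Section TwoStepSets.
Variables (t l : nat * nat) (w1 w3 : V).
Hypotheses (d13 : tdist A w1 w3 = l) (valency_le : valency A l <= valency A t).

Lemma Pset_eq_src w0 : tdist A w0 w1 = t ->
  {in Pset A t t w1 w3, forall z, tdist A w0 z = l} ->
  Pset A l (swap_pair t) w0 w1 = Pset A t t w1 w3.
Proof.
move=> d01 d0Y; apply/esym/eqP; rewrite eqEcard; apply/andP; split.
  apply/subsetP => z zY; move: (zY); rewrite !inE => /andP [/eqP d1z _].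
  by rewrite d0Y // eq_tdist_sym swap_pairK d1z !eqxx.
rewrite -(pnumE _ _ d01) -(pnumE _ _ d13) -(leq_pmul2l (valency_gt0 d01)).
by rewrite valency_pnum_src leq_mul2r; apply/orP; right.
Qed.

Lemma Pset_eq_tgt w4 : tdist A w3 w4 = t ->
  {in Pset A t t w1 w3, forall z, tdist A z w4 = l} ->
  Pset A (swap_pair t) l w3 w4 = Pset A t t w1 w3.
Proof.
move=> d34 dY4; apply/esym/eqP; rewrite eqEcard; apply/andP; split.
  apply/subsetP => z zY; move: (zY); rewrite !inE => /andP [_ /eqP dz3].
  by rewrite dY4 // eq_tdist_sym swap_pairK dz3 !eqxx.
rewrite -(pnumE _ _ d34) -(pnumE _ _ d13) -(leq_pmul2l (valency_gt0 d34)).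
by rewrite -[valency A t]valency_sym valency_pnum_tgt !valency_sym leq_mul2r; apply/orP; right.
Qed.

End TwoStepSets.

End WeaklyDistanceRegular.

Section ShortCircuits.
Variables (V : finType) (A : rel V) (q : nat).
Hypotheses (wdr : weakly_distance_regular A) (q_ge3 : 3 <= q).

Let triangle := dist_triangle (wdr_strongly_connected wdr).
Let arc_tdist x y : tdist A x y = (1, q - 1) -> A x y /\ dist A y x = q - 1.
Proof. by move/(tdist_arc_type wdr)/andP => [? /eqP]. Qed.

Lemma tdist_across_short_circuit w0 w1 w2 w3 :
  tdist A w0 w1 = (1, q - 1) -> tdist A w1 w2 = (1, q - 1) -> A w2 w3 ->
  dist A w3 w0 <= q - 3 -> tdist A w1 w3 = (2, q - 2).
Proof.
move=> /arc_tdist [/(dist_arc wdr) d01 d10] /arc_tdist [/(dist_arc wdr) d12 d21].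
move=> /(dist_arc wdr) d23 d30.
have := triangle w1 w2 w3; have := triangle w1 w3 w0; have := triangle w2 w3 w1.
have := triangle w3 w0 w1.
rewrite /tdist => *; congr pair; lia.
Qed.

Lemma tdist_short_circuit_Pset w0 w1 w3 w4 z :
  A w0 w1 -> A w3 w4 -> dist A w3 w0 <= q - 3 -> dist A w4 w1 <= q - 3 ->
  z \in Pset A (1, q - 1) (1, q - 1) w1 w3 ->
  tdist A w0 z = (2, q - 2) /\ tdist A z w4 = (2, q - 2).
Proof.
move=> /(dist_arc wdr) d01 /(dist_arc wdr) d34 d30 d41.
rewrite inE => /andP [/eqP /arc_tdist [/(dist_arc wdr) d1z dz1]].
move=> /eqP /arc_tdist [/(dist_arc wdr) dz3 d3z].
have := triangle w0 w1 z; have := triangle w3 w0 z; have := triangle z w3 w0.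
have := triangle z w0 w1; have := triangle z w3 w4; have := triangle z w4 w1.
have := triangle w4 w1 z; have := triangle w3 w4 z.
by rewrite /tdist => *; split; congr pair; lia.
Qed.

End ShortCircuits.

Lemma path_map_iota (T : Type) (e : rel T) (c : nat -> T) a n :
  (forall j, e (c j) (c j.+1)) -> path e (c a) (map c (iota a.+1 n)).
Proof. by move=> ec; elim: n a => [|n IH] a //=; rewrite ec IH. Qed.

Section PeriodicWalks.
Variables (V : finType) (A : rel V) (p : nat) (c : nat -> V).
Hypotheses (p_gt0 : 0 < p) (c_periodic : forall j, c (j + p) = c j).

Lemma periodic_mod j : c j = c (j %% p).
Proof.
rewrite {1}(divn_eq j p); elim: (j %/ p) => [|k IH]; first by rewrite mul0n add0n.
by rewrite mulSn -addnA addnC c_periodic.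
Qed.

Lemma periodic_succ j : c j.+1 = c (j %% p).+1.
Proof. by rewrite periodic_mod [RHS]periodic_mod -[j.+1]addn1 -modnDml addn1. Qed.

Lemma cycle_periodic (e : rel V) :
  (forall j, e (c j) (c j.+1)) -> cycle e (map c (iota 0 p)).
Proof.
move=> ec; rewrite -(prednK p_gt0) /= -{2}[c 0]c_periodic add0n -(prednK p_gt0).
by rewrite -map_rcons -cats1 -[[:: p.-1.+1]]/(iota (1 + p.-1) 1) -iotaD addn1 path_map_iota.
Qed.

Hypothesis wdr : weakly_distance_regular A.

Lemma periodic_arc_type_lt r :
  (forall j, tdist A (c j) (c j.+1) = (1, r)) -> r < p.
Proof.
move=> c_type; case: (c_type 0) => _ <-.
have := dist_chain 1 (p - 1) (fun j => tdist1_arc wdr (c_type j)).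
by rewrite subnKC // -[p]add0n c_periodic; lia.
Qed.

Lemma type_circuit_periodic :
  (forall j, tdist A (c j) (c j.+1) = (1, p - 1)) -> type_circuit A (p - 1) (map c (iota 0 p)).
Proof.
move=> c_type; apply/and3P; split; first by rewrite -(prednK p_gt0).
- rewrite map_inj_in_uniq ?iota_uniq // => i j; rewrite !mem_iota !add0n => ip jp.
  wlog lt_ij : i j ip jp / i < j.
    move=> W cij; case: (ltngtP i j) => [ij|ji|//]; first exact: W.
    by apply/esym/W.
  (* c j = c (i + p) lies at distance p - 1 from c (i + p - 1), which the walk
     reaches from c j in fewer steps. *)
  move=> cij; case: (c_type (i + p).-1); rewrite prednK ?addn_gt0 ?p_gt0 ?orbT // c_periodic.
  move=> _; rewrite cij; have := dist_chain j ((i + p).-1 - j) (fun k => tdist1_arc wdr (c_type k)).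
  by rewrite subnKC; lia.
- by apply: cycle_periodic => j; apply/(tdist_arc_type wdr).
Qed.

End PeriodicWalks.

Lemma modn_succ (T : Type) (f : nat -> T) q j :
  0 < q -> f q = f 0 -> f (j.+1 %% q) = f (j %% q).+1.
Proof.
move=> q_gt0 fq; rewrite -addn1 -modnDml addn1.
have : j %% q < q by rewrite ltn_mod.
by rewrite leq_eqVlt => /orP [/eqP ->|/modn_small ->]; rewrite ?modnn.
Qed.

Lemma eq_modn_succ q i j : i.+1 < q -> (j.+1 %% q == i.+1) = (j %% q == i).
Proof.
move=> lt_iq; rewrite -addn1 -modnDml addn1.
have : j %% q < q by rewrite ltn_mod; lia.
rewrite leq_eqVlt => /orP [/eqP jq|/modn_small -> //].
by rewrite jq modnn; apply/esym/negbTE/eqP; lia.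
Qed.

Section CircuitOfLengthQ.
Variables (V : finType) (A : rel V) (q : nat).
Hypotheses (wdr : weakly_distance_regular A) (q_ge3 : 3 <= q).
Hypothesis pnum_gt0 : 0 < pnum A (1, q - 1) (1, q - 1) (2, q - 2).

Definition typed_closed_walk (k : nat) (c : nat -> V) : Prop :=
  [/\ forall j, c (j + q) = c j, forall j, A (c j) (c j.+1) &
      forall j, j %% q < k -> tdist A (c j) (c j.+1) = (1, q - 1)].

Lemma typed_closed_walk2 : exists c, typed_closed_walk 2 c.
Proof.
move: pnum_gt0; rewrite /pnum; case: pickP => [[u w] /= /eqP duw|//].
case/card_gt0P => v; rewrite inE => /andP [/eqP duv /eqP dvw].
have := dist_walkn (wdr_strongly_connected wdr) w u; case: duw => _ ->.
case/walknP => p [size_p path_p last_p].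
pose L := [:: u, v, w & p].
have Lq : nth u L q = u.
  have -> : q = (size L).-1 by rewrite /= size_p; lia.
  by rewrite nth_last /= last_p.
have L_arc i : i < q -> A (nth u L i) (nth u L i.+1).
  move=> iq; apply: (pathP u (_ : path A u (behead L))) => /=.
  - by rewrite (tdist1_arc wdr duv) (tdist1_arc wdr dvw).
  - by rewrite size_p; lia.
exists (fun j => nth u L (j %% q)); split=> [j|j|j].
- by rewrite modnDr.
- by rewrite (@modn_succ _ (nth u L)) ?L_arc ?ltn_mod //; lia.
- rewrite (@modn_succ _ (nth u L)) //; last lia.
  by case: (j %% q) => [|[|//]].
Qed.

Lemma typed_closed_walk_succ k c : 2 <= k < q -> typed_closed_walk k c ->
  exists c', typed_closed_walk k.+1 c'.
Proof.
case: k => [|[|k]] //= kq [c_per c_arc c_type].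
have d01 : tdist A (c k) (c k.+1) = (1, q - 1) by apply: c_type; rewrite modn_small; lia.
have d12 : tdist A (c k.+1) (c k.+2) = (1, q - 1) by apply: c_type; rewrite modn_small; lia.
have d30 : dist A (c k.+3) (c k) <= q - 3.
  have := dist_chain k.+3 (q - 3) c_arc.
  by rewrite (_ : k.+3 + (q - 3) = k + q) ?c_per //; lia.
have := pnum_gt0; rewrite (pnumE wdr _ _ (tdist_across_short_circuit wdr q_ge3 d01 d12 (c_arc _) d30)).
case/card_gt0P => z; rewrite inE => /andP [/eqP d1z /eqP dz3].
have c_succ := periodic_succ c_per.
have c_mod := periodic_mod c_per.
exists (fun j => if j %% q == k.+2 then z else c j); split=> [j|j|j].
- by rewrite modnDr c_per.
- rewrite eq_modn_succ; last lia.
  case: eqP => [jk2|_]; first by rewrite jk2 gtn_eqF // c_succ jk2 (tdist1_arc wdr dz3).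
  case: eqP => [jk1|_]; last exact: c_arc.
  by rewrite c_mod jk1 (tdist1_arc wdr d1z).
- rewrite eq_modn_succ; last lia.
  case: eqP => [jk2|jk2]; first by rewrite jk2 gtn_eqF // c_succ jk2.
  case: eqP => [jk1|jk1 jk]; first by rewrite c_mod jk1.
  by apply: c_type; lia.
Qed.

Lemma exists_type_circuit_of_size_q : exists2 s, type_circuit A (q - 1) s & size s = q.
Proof.
have [c [c_per _ c_type]] : exists c, typed_closed_walk q c.
  have walk k : 2 <= k <= q -> exists c, typed_closed_walk k c.
    elim: k => [//|k IH] /andP [k_ge1 k_le].
    have [->|k_ge2] := eqVneq k 1; first exact: typed_closed_walk2.
    by have [|c] := IH; [lia | apply: typed_closed_walk_succ; lia].
  by apply: walk; lia.
exists (map c (iota 0 q)); last by rewrite size_map size_iota.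
by apply: type_circuit_periodic => // [|j]; [lia | apply: c_type; rewrite ltn_mod; lia].
Qed.

End CircuitOfLengthQ.

Section GammaSquare.
Variables (V : finType) (A : rel V).
Hypothesis wdr : weakly_distance_regular A.

Lemma mem_Gamma_sq t u v w :
  tdist A u v = t -> tdist A v w = t -> tdist A u w \in Gamma_sq A t.
Proof.
move=> duv dvw; rewrite mem_undup mem_filter -lt0n (pnumE wdr _ _ (erefl (tdist A u w))).
apply/andP; split; first by apply/card_gt0P; exists v; rewrite inE duv dvw !eqxx.
by apply/mapP; exists (u, w); rewrite ?mem_enum ?inE.
Qed.

Lemma Gamma_sq1_tdist t u v w u' v' w' : size (Gamma_sq A t) = 1 ->
  tdist A u v = t -> tdist A v w = t -> tdist A u' v' = t -> tdist A v' w' = t ->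
  tdist A u w = tdist A u' w'.
Proof.
move=> size1 duv dvw du'v' dv'w'.
move: (mem_Gamma_sq duv dvw) (mem_Gamma_sq du'v' dv'w').
by case: (Gamma_sq A t) size1 => [|l []] // _; rewrite !inE => /eqP -> /eqP ->.
Qed.

End GammaSquare.

Section Differences.
Local Open Scope ring_scope.
Variable G : zmodType.

Lemma subr_chain (x y z : G) : (y - x) + (z - y) = z - x.
Proof. by rewrite addrC subrKA. Qed.

Lemma subr_parallelogram (a b c d : G) : b - a = d - c -> c - a = d - b.
Proof. by move=> e; rewrite -(subr_chain a b c) e addrC subr_chain. Qed.

End Differences.

Section Cayley.
Local Open Scope ring_scope.
Variables (V : finType) (A : rel V) (G : finZmodType) (S : {set G}) (phi : V -> G).
Hypothesis cayley : cayley_iso A S phi.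

Lemma cayley_shift v s : exists w, phi w - phi v = s.
Proof.
by case: cayley => [[g _ phiK] _ _]; exists (g (s + phi v)); rewrite phiK addrK.
Qed.

Lemma cayley_translate x y x' y' :
  phi y - phi x = phi y' - phi x' -> tdist A x y = tdist A x' y'.
Proof.
case: cayley => [[g gK phiK] _ A_phi] eq_diff.
pose tau (u : G) v := g (phi v + u).
have tau_arc u v w : A (tau u v) (tau u w) = A v w by rewrite !A_phi !phiK [phi v + u]addrC addrKA.
have tauK u : cancel (tau u) (tau (- u)) by move=> v; rewrite /tau phiK addrK gK.
have tau_walkn u n v w : walkn A n (tau u v) (tau u w) = walkn A n v w.
  elim: n v => [|n IH] v /=; first by rewrite (can_eq (tauK u)).
  apply/existsP/existsP => [[z /andP [Az Wz]]|[z /andP [Az Wz]]]; last first.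
    by exists (tau u z); rewrite tau_arc IH Az.
  exists (tau (- u) z); rewrite -(tau_arc u) -IH.
  by rewrite (_ : tau u (tau (- u) z) = z) ?Az // /tau phiK subrK gK.
pose u := phi x' - phi x.
have tau_x : tau u x = x' by rewrite /tau subrKC gK.
have tau_y : tau u y = y' by rewrite /tau addrCA eq_diff subrKC gK.
by rewrite -tau_x -tau_y /tdist /dist; congr pair; apply: eq_find => n; rewrite tau_walkn.
Qed.

End Cayley.

Section CayleyShortCircuit.
Local Open Scope ring_scope.
Variables (V : finType) (A : rel V) (G : finZmodType) (S : {set G}) (phi : V -> G) (q : nat).
Hypotheses (cayley : cayley_iso A S phi) (wdr : weakly_distance_regular A).
Hypotheses (q_gt3 : (3 < q)%N) (valency_le : (valency A (2, q - 2) <= valency A (1, q - 1))%N).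

Local Notation t := (1, q - 1)%N.

Lemma cayley_short_circuit_shift x a b d e z w :
  tdist A x a = t -> tdist A a b = t -> tdist A b d = t -> tdist A d e = t ->
  (dist A e x <= q - 4)%N -> tdist A x z = (2, q - 2)%N -> tdist A a z = t ->
  phi w - phi z = phi b - phi a -> tdist A a w = (2, q - 2)%N.
Proof.
(* a -> y2 -> y3 -> e has the arc differences of a -> b -> d -> e in rotated order,
   so x -> a -> y2 -> y3 -> e closes up as quickly as the original walk; and
   g = a + y3 - z is the mirror image of z in P_{t,t}(a, y3). *)
move=> dxa dab dbd dde dex dxz daz dzw.
have q_ge3 : (3 <= q)%N by apply: ltnW.
have arc := tdist1_arc wdr; have triangle := dist_triangle (wdr_strongly_connected wdr).
have [y2 dy2] := cayley_shift cayley a (phi d - phi b).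
have [y3 dy3] := cayley_shift cayley y2 (phi e - phi d).
have day2 : tdist A a y2 = t by rewrite (cayley_translate cayley dy2).
have dy23 : tdist A y2 y3 = t by rewrite (cayley_translate cayley dy3).
have dy3e : tdist A y3 e = t.
  rewrite (cayley_translate cayley (x' := a) (y' := b)) //.
  by rewrite -(subr_parallelogram dy3) (subr_parallelogram dy2).
have dy3x : (dist A y3 x <= q - 3)%N.
  by have := triangle y3 e x; rewrite (dist_arc wdr (arc _ _ _ dy3e)); lia.
have dea : (dist A e a <= q - 3)%N.
  by have := triangle e x a; rewrite (dist_arc wdr (arc _ _ _ dxa)); lia.
have day3 := tdist_across_short_circuit wdr q_ge3 dxa day2 (arc _ _ _ dy23) dy3x.
have short := tdist_short_circuit_Pset wdr q_ge3 (arc _ _ _ dxa) (arc _ _ _ dy3e) dy3x dea.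
have src := Pset_eq_src wdr day3 valency_le dxa (fun z zY => proj1 (short z zY)).
have tgt := Pset_eq_tgt wdr day3 valency_le dy3e (fun z zY => proj2 (short z zY)).
have zY : z \in Pset A t t a y3 by rewrite -src inE dxz eq_tdist_sym daz !eqxx.
have [g dg] := cayley_shift cayley y3 (phi a - phi z).
have gY : g \in Pset A t t a y3.
  move: zY; rewrite !inE => /andP [_ dzy3].
  rewrite tdist_sym -(cayley_translate cayley (subr_parallelogram dg)) -tdist_sym dzy3.
  rewrite (cayley_translate cayley (x' := a) (y' := z)) ?daz ?eqxx //.
  by rewrite -[LHS]opprB dg opprB.
move: gY; rewrite -tgt inE => /andP [_ /eqP <-].
apply: (cayley_translate cayley); rewrite -(subr_chain (phi a) (phi z)) dzw.
by rewrite -(subr_chain (phi g) (phi y3)) -[phi y3 - phi g]opprB dg opprB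
  -(subr_parallelogram dy3) -(subr_parallelogram dy2).
Qed.

End CayleyShortCircuit.

Section Circuit.
Variables (V : finType) (A : rel V) (q : nat) (x0 : V) (xs : seq V).
Hypotheses (wdr : weakly_distance_regular A) (q_ge3 : 3 <= q).
Hypothesis circ : type_circuit A (q - 1) (x0 :: xs).

Local Notation m := (size xs).+1.
Local Notation c n := (cvert x0 xs (Posz n)).
Local Notation t := (1, q - 1).

Lemma cvert_nat n : c n = nth x0 (x0 :: xs) (n %% m).
Proof. by rewrite /cvert modz_nat. Qed.

Lemma cvert_periodic n : c (n + m) = c n.
Proof. by rewrite !cvert_nat modnDr. Qed.

Lemma cvert_offset (i : int) : exists n : nat, forall d : nat, cvert x0 xs (i + d%:Z) = c (d + n).
Proof.
have [n mod_i] : exists n : nat, (i %% m)%Z = n by exists `|(i %% m)%Z|%N; rewrite gez0_abs ?modz_ge0.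
by exists n => d; rewrite /cvert -modzDml mod_i -PoszD addnC.
Qed.

Lemma circuit_arc_type n : tdist A (c n) (c n.+1) = t.
Proof.
apply/(tdist_arc_type wdr); move: circ => /and3P [_ _ /(pathP x0) cyc].
pose s := rcons (x0 :: xs) x0.
have nth_s i : i < m -> nth x0 (x0 :: xs) i = nth x0 s i by move=> lt_im; rewrite nth_rcons lt_im.
rewrite !cvert_nat !nth_s ?ltn_mod // (@modn_succ _ (nth x0 s)) //; last by rewrite nth_rcons ltnn eqxx.
by apply: cyc; rewrite size_rcons ltn_mod.
Qed.

Lemma circuit_size_ge : q <= m.
Proof.
have := periodic_arc_type_lt (isT : 0 < m) cvert_periodic wdr circuit_arc_type; lia.
Qed.

Hypothesis minimal :
  forall s : seq V, type_circuit A (q - 1) s -> size (x0 :: xs) <= size s.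

Lemma circuit_size_eq : 0 < pnum A t t (2, q - 2) -> m = q.
Proof.
move=> pnum_gt0; have [s s_circ s_size] := exists_type_circuit_of_size_q wdr q_ge3 pnum_gt0.
by have := minimal s_circ; rewrite /= s_size; have := circuit_size_ge; lia.
Qed.

Lemma circuit_return_dist n k : m = q -> k <= q -> dist A (c (n + k)) (c n) <= q - k.
Proof.
move=> mq k_le_q; have := dist_chain (n + k) (q - k) (fun j => tdist1_arc wdr (circuit_arc_type j)).
by rewrite -addnA subnKC // -mq cvert_periodic.
Qed.

Lemma circuit_skip_tdist n : m = q -> tdist A (c n.+1) (c n.+3) = (2, q - 2).
Proof.
move=> mq; apply: (tdist_across_short_circuit wdr q_ge3 (circuit_arc_type n)).
- exact: circuit_arc_type.
- exact: (tdist1_arc wdr (circuit_arc_type _)).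
- by rewrite -addn3 circuit_return_dist.
Qed.

Variables (a b : nat).
Hypothesis tdist02 : tdist A x0 (cvert x0 xs 2%:Z) = (a, b).
Hypothesis valency_le : valency A (a, b) <= valency A t.
Hypothesis pnum_or_Gamma_sq :
  0 < pnum A t t (2, q - 2) \/ size (Gamma_sq A t) = 1.

Local Notation Y n := (Pset A t t (c n.+1) (c n.+3)).

Lemma circuit_ab_eq : m = q -> (a, b) = (2, q - 2).
Proof.
move=> mq; have e0 : c m = x0 by rewrite -[m]add0n cvert_periodic cvert_nat mod0n.
have e2 : c m.+2 = c 2 by rewrite -addn2 addnC cvert_periodic.
by rewrite -tdist02 -(circuit_skip_tdist m.-1 mq) prednK // e0 e2.
Qed.

Lemma circuit_Gamma_two_step u v w : size (Gamma_sq A t) = 1 ->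
  tdist A u v = t -> tdist A v w = t -> tdist A u w = (a, b).
Proof.
move=> Gamma1 duv dvw; have c0 : c 0 = x0 by rewrite cvert_nat mod0n.
rewrite -tdist02 -{1}c0.
by apply: (Gamma_sq1_tdist wdr Gamma1 duv dvw (circuit_arc_type 0)); apply: circuit_arc_type.
Qed.

Lemma circuit_two_step n :
  [/\ tdist A (c n.+1) (c n.+3) = (a, b),
      {in Y n, forall z, tdist A (c n) z = (a, b)} &
      {in Y n, forall z, tdist A z (c n.+4) = (a, b)}].
Proof.
case: pnum_or_Gamma_sq => [/circuit_size_eq mq|Gamma1].
  have short k : dist A (c k.+3) (c k) <= q - 3 by rewrite -addn3 circuit_return_dist.
  have short_Y := tdist_short_circuit_Pset wdr q_ge3 (tdist1_arc wdr (circuit_arc_type n))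
    (tdist1_arc wdr (circuit_arc_type n.+3)) (short n) (short n.+1).
  rewrite circuit_ab_eq //; split=> [|z /short_Y []|z /short_Y []] //.
  exact: circuit_skip_tdist.
have two_step := circuit_Gamma_two_step Gamma1.
split; first exact: two_step (circuit_arc_type _) (circuit_arc_type _).
- by move=> z; rewrite inE => /andP [/eqP d1z _]; apply: two_step (circuit_arc_type n) d1z.
- by move=> z; rewrite inE => /andP [_ /eqP dz3]; apply: two_step dz3 (circuit_arc_type n.+3).
Qed.

Lemma circuit_Pset_eq n :
  [/\ tdist A (c n.+1) (c n.+3) = (a, b),
      Pset A (a, b) (q - 1, 1) (c n) (c n.+1) = Y n &
      Pset A (q - 1, 1) (a, b) (c n.+3) (c n.+4) = Y n].
Proof.
have [d13 d0Y dY4] := circuit_two_step n; split=> //.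
- exact: (Pset_eq_src wdr d13 valency_le (circuit_arc_type n) d0Y).
- exact: (Pset_eq_tgt wdr d13 valency_le (circuit_arc_type n.+3) dY4).
Qed.

Section CayleyCircuit.
Local Open Scope ring_scope.
Variables (G : finZmodType) (S : {set G}) (phi : V -> G).
Hypotheses (q_gt3 : (3 < q)%N) (cayley : cayley_iso A S phi).

Lemma circuit_cayley_shift n z w : z \in Y n ->
  phi w - phi z = phi (c n.+2) - phi (c n.+1) -> tdist A (c n.+1) w = (a, b).
Proof.
move=> zY dzw; have [_ d0Y _] := circuit_two_step n.
have d1z : tdist A (c n.+1) z = t by move: zY; rewrite inE => /andP [/eqP].
case: pnum_or_Gamma_sq => [/circuit_size_eq mq|Gamma1].
  have ab2 := circuit_ab_eq mq; rewrite ab2 in d0Y *.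
  have valency_le2 : (valency A (2, q - 2) <= valency A t)%N by rewrite -ab2.
  apply: (cayley_short_circuit_shift cayley wdr q_gt3 valency_le2 (circuit_arc_type n)) dzw.
  1-3: exact: circuit_arc_type.
  - by rewrite -addn4 circuit_return_dist.
  - exact: (d0Y z zY).
  - exact: d1z.
apply: (circuit_Gamma_two_step Gamma1 (circuit_arc_type n.+1)).
by rewrite -(cayley_translate cayley (subr_parallelogram (esym dzw))).
Qed.

Lemma circuit_cayley_Y n :
  [set phi z - phi (c n.+1) | z in Y n] = [set phi z - phi (c n.+2) | z in Y n.+1].
Proof.
have [d13 _ _] := circuit_Pset_eq n; have [d24 Y1 _] := circuit_Pset_eq n.+1.
apply/eqP; rewrite eqEcard; apply/andP; split; last first.
  have phi_inj : injective phi by case: cayley => /bij_inj.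
  have sub_inj v : injective (fun z => phi z - phi v) by move=> z1 z2 /addIr /phi_inj.
  by rewrite !card_imset // -(pnumE wdr _ _ d13) -(pnumE wdr _ _ d24).
apply/subsetP => _ /imsetP [z zY ->].
have [w dzw] := cayley_shift cayley z (phi (c n.+2) - phi (c n.+1)).
have dpar := subr_parallelogram (esym dzw).
apply/imsetP; exists w => //.
rewrite -Y1 inE (circuit_cayley_shift zY dzw) eq_tdist_sym -(cayley_translate cayley dpar).
by move: zY; rewrite inE => /andP [-> _]; rewrite eqxx.
Qed.

End CayleyCircuit.

End Circuit.

Lemma cvert_window (V : finType) (x0 : V) (xs : seq V) (i : int) : exists n : nat,
  [/\ cvert x0 xs (i - 2%:Z)%R = cvert x0 xs n, cvert x0 xs (i - 1)%R = cvert x0 xs n.+1,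
      cvert x0 xs i = cvert x0 xs n.+2, cvert x0 xs (i + 1)%R = cvert x0 xs n.+3 &
      cvert x0 xs (i + 2%:Z)%R = cvert x0 xs n.+4].
Proof.
have [n cn] := cvert_offset x0 xs (i - 2%:Z)%R.
exists n; split; [rewrite -(cn 0) | rewrite -(cn 1) | rewrite -(cn 2) | rewrite -(cn 3) | rewrite -(cn 4)];
  by congr (cvert _ _ _); lia.
Qed.

Unset Implicit Arguments.

Theorem lemma2p7 (V : finType) (A : rel V) (q : nat) (x0 : V) (xs : seq V)
    (a b : nat) :
  weakly_distance_regular A ->
  (3 <= q)%N ->
  type_circuit A (q - 1) (x0 :: xs) ->
  (forall s : seq V, type_circuit A (q - 1) s -> (size (x0 :: xs) <= size s)%N) ->
  tdist A x0 (cvert x0 xs 2%:Z) = (a, b) ->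
  (valency A (a, b) <= valency A (1, q - 1))%N ->
  ((0 < pnum A (1, q - 1) (1, q - 1) (2, q - 2))%N \/
     size (Gamma_sq A (1, q - 1)) = 1%N) ->
  (forall i : int,
     [/\ tdist A (cvert x0 xs (i - 1)%R) (cvert x0 xs (i + 1)%R) = (a, b),
         Pset A (a, b) (q - 1, 1) (cvert x0 xs (i - 2%:Z)%R) (cvert x0 xs (i - 1)%R)
           = Ycirc A q x0 xs i &
         Pset A (q - 1, 1) (a, b) (cvert x0 xs (i + 1)%R) (cvert x0 xs (i + 2%:Z)%R)
           = Ycirc A q x0 xs i ]) /\
  ((3 < q)%N ->
     forall (G : finZmodType) (S : {set G}) (phi : V -> G),
       cayley_iso A S phi ->
       forall i : int,
         [set (phi z - phi (cvert x0 xs (i - 1)%R))%R | z in Ycirc A q x0 xs i]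
         = [set (phi z - phi (cvert x0 xs i))%R | z in Ycirc A q x0 xs (i + 1)%R]).
Proof.
move=> wdr q_ge3 circ minimal d02 valency_le pnum_or_Gamma_sq.
split=> [i|q_gt3 G S phi cayley i]; have [n [e0 e1 e2 e3 e4]] := cvert_window x0 xs i.
- by rewrite /Ycirc e0 e1 e3 e4; apply: circuit_Pset_eq.
- rewrite /Ycirc addrK -addrA e1 e2 e3 e4.
  exact: (circuit_cayley_Y wdr q_ge3 circ minimal d02 valency_le pnum_or_Gamma_sq q_gt3 cayley n).
Qed.
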